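(* In the nonrepetitive game over any symbol set, suppose that whenever it is Ann's turn and the current sequence is $s_1,\ldots,s_{m-1}$ (so $m$ is odd), Ann chooses a symbol $s_m$ not excluded by the following rules: (i) $s_{m-2}$ is excluded; (ii) if $s_{m-1}=s_{m-4}$, then $s_{m-3}$ is excluded; (iii) if only one symbol has been excluded by rules (i) and (ii), then $s_{m-4}$ is also excluded (rules referring to nonexistent terms are ignored). Then, regardless of Ben's moves, the sequence built never contains a repetition of size $2$, $3$ or $4$.
   Context: A repetition of size $h\geq1$ in a sequence is a block of consecutive terms of the form $x_1\ldots x_h x_1\ldots x_h$. In the nonrepetitive game Ann and Ben alternately (Ann first) append symbols from a symbol set to a sequence, nothing ever being erased; thus Ann chooses the terms with odd indices $s_1,s_3,\ldots$ and Ben those with even indices. *)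

(* The sequence is s : nat -> T, with terms s 1, s 2, ... (1-indexed);
   only the terms s 1 .. s n of a finite play are relevant. *)
From Stdlib Require Import Arith Lia.

(* Rule (i): s_{m-2} is excluded (only if the term exists, i.e. m-2 >= 1). *)
Definition excl_i {T : Type} (s : nat -> T) (m : nat) (x : T) : Prop :=
  3 <= m /\ x = s (m - 2).

Definition excl_ii {T : Type} (s : nat -> T) (m : nat) (x : T) : Prop :=
  5 <= m /\ s (m - 1) = s (m - 4) /\ x = s (m - 3).

Definition only_one_excluded {T : Type} (s : nat -> T) (m : nat) : Prop :=
  exists y : T, forall x : T, (excl_i s m x \/ excl_ii s m x) <-> x = y.

Definition excl_iii {T : Type} (s : nat -> T) (m : nat) (x : T) : Prop :=
  only_one_excluded s m /\ 5 <= m /\ x = s (m - 4).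

Definition excluded {T : Type} (s : nat -> T) (m : nat) (x : T) : Prop :=
  excl_i s m x \/ excl_ii s m x \/ excl_iii s m x.

Definition ann_follows_strategy {T : Type} (s : nat -> T) (n : nat) : Prop :=
  forall m : nat, 1 <= m <= n -> Nat.Odd m -> ~ excluded s m (s m).

Definition has_repetition {T : Type} (s : nat -> T) (n h : nat) : Prop :=
  exists i : nat, 1 <= i /\ i + 2 * h - 1 <= n /\
    forall j : nat, j < h -> s (i + j) = s (i + h + j).

(* Every repetition of size h contains a run of 2h-1 consecutive terms with
   period h that starts at an odd index k (start at the repetition itself or one
   step later).  For such a run, the term s_{k+2} (h = 2), resp. s_{k+4}
   (h = 3, 4), is one of Ann's moves, and it copies a symbol that her strategy
   excluded at that moment:
   - h = 2: s_{k+2} = s_k is excluded by rule (i);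
   - h = 3: s_{k+3} = s_k, so s_{k+4} = s_{k+1} is excluded by rule (ii);
   - h = 4: s_{k+4} = s_k is excluded by rule (iii) at move k+4 unless rule (ii)
     excluded a second symbol there, i.e. unless s_{k+1} <> s_{k+2}; in that
     case rule (iii) at move k+6 excludes s_{k+6} = s_{k+2}. *)

From Stdlib Require Import Arith Lia.

Lemma odd_add_even (k p : nat) : Nat.Odd k -> Nat.Odd (k + 2 * p).
Proof. intros [q ->]. exists (q + p). lia. Qed.

(* The terms s_k, ..., s_{k+h+l-1} have period h (l comparisons). *)
Definition periodic_run {T : Type} (s : nat -> T) (k h l : nat) : Prop :=
  forall j : nat, j < l -> s (k + h + j) = s (k + j).

Lemma repetition_odd_run {T : Type} (s : nat -> T) (n h : nat) :
  1 <= h -> has_repetition s n h ->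
  exists k : nat, Nat.Odd k /\ 1 <= k /\ k + 2 * h - 2 <= n /\
    periodic_run s k h (h - 1).
Proof.
  intros Hh [i [Hi [Hn Hrep]]].
  destruct (Nat.Even_or_Odd i) as [[p Hp] | Hodd].
  - exists (i + 1). split; [exists p; lia |]. split; [lia |]. split; [lia |].
    intros j Hj. specialize (Hrep (j + 1) ltac:(lia)).
    replace (i + 1 + h + j) with (i + h + (j + 1)) by lia.
    replace (i + 1 + j) with (i + (j + 1)) by lia.
    symmetry. exact Hrep.
  - exists i. split; [exact Hodd |]. split; [lia |]. split; [lia |].
    intros j Hj. symmetry. apply Hrep. lia.
Qed.

Section AnnStrategy.
Variables (T : Type) (s : nat -> T) (n : nat).
Hypothesis strategy : ann_follows_strategy s n.

Lemma rule_i_forbids (k : nat) :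
  Nat.Odd k -> 1 <= k -> k + 2 <= n -> s (k + 2) <> s k.
Proof.
  intros Hodd Hk Hn E.
  apply (strategy (k + 2)); [lia | exact (odd_add_even k 1 Hodd) |].
  left. split; [lia |]. replace (k + 2 - 2) with k by lia. exact E.
Qed.

Lemma rule_ii_forbids (k : nat) :
  Nat.Odd k -> 1 <= k -> k + 4 <= n ->
  s (k + 3) = s k -> s (k + 4) <> s (k + 1).
Proof.
  intros Hodd Hk Hn E3 E4.
  apply (strategy (k + 4)); [lia | exact (odd_add_even k 2 Hodd) |].
  right; left. unfold excl_ii.
  replace (k + 4 - 1) with (k + 3) by lia.
  replace (k + 4 - 4) with k by lia.
  replace (k + 4 - 3) with (k + 1) by lia.
  split; [lia | split; assumption].
Qed.

(* At move k+4, rules (i) and (ii) exclude only s_{k+2} as soon as rule (ii)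
   either does not fire or excludes that same symbol. *)
Lemma only_one_excluded_at (k : nat) :
  (s (k + 3) = s k -> s (k + 1) = s (k + 2)) -> only_one_excluded s (k + 4).
Proof.
  intros Hii. exists (s (k + 2)). intros x. unfold excl_i, excl_ii.
  replace (k + 4 - 1) with (k + 3) by lia.
  replace (k + 4 - 2) with (k + 2) by lia.
  replace (k + 4 - 3) with (k + 1) by lia.
  replace (k + 4 - 4) with k by lia.
  split.
  - intros [[_ ->] | [_ [E ->]]]; [reflexivity | exact (Hii E)].
  - intros ->. left. split; [lia | reflexivity].
Qed.

Lemma rule_iii_forbids (k : nat) :
  Nat.Odd k -> 1 <= k -> k + 4 <= n ->
  (s (k + 3) = s k -> s (k + 1) = s (k + 2)) -> s (k + 4) <> s k.
Proof.
  intros Hodd Hk Hn Hii E.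
  apply (strategy (k + 4)); [lia | exact (odd_add_even k 2 Hodd) |].
  right; right. split; [exact (only_one_excluded_at k Hii) |].
  split; [lia |]. replace (k + 4 - 4) with k by lia. exact E.
Qed.

Lemma no_odd_run_2 (k : nat) :
  Nat.Odd k -> 1 <= k -> k + 2 <= n -> ~ periodic_run s k 2 1.
Proof.
  intros Hodd Hk Hn Hrun.
  apply (rule_i_forbids k Hodd Hk Hn).
  rewrite <- (Nat.add_0_r (k + 2)), (Hrun 0) by lia. f_equal. lia.
Qed.

Lemma no_odd_run_3 (k : nat) :
  Nat.Odd k -> 1 <= k -> k + 4 <= n -> ~ periodic_run s k 3 2.
Proof.
  intros Hodd Hk Hn Hrun.
  apply (rule_ii_forbids k Hodd Hk Hn).
  - rewrite <- (Nat.add_0_r (k + 3)), (Hrun 0) by lia. f_equal. lia.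
  - replace (k + 4) with (k + 3 + 1) by lia. rewrite (Hrun 1) by lia. reflexivity.
Qed.

(* No odd run of period 4 and length 7: rule (iii) fires at move k+4, or else
   s_{k+1} <> s_{k+2} and it fires at move k+6. *)
Lemma no_odd_run_4 (k : nat) :
  Nat.Odd k -> 1 <= k -> k + 6 <= n -> ~ periodic_run s k 4 3.
Proof.
  intros Hodd Hk Hn Hrun.
  assert (E4 : s (k + 4) = s k).
  { rewrite <- (Nat.add_0_r (k + 4)), (Hrun 0) by lia. f_equal. lia. }
  assert (E5 : s (k + 2 + 3) = s (k + 1)).
  { replace (k + 2 + 3) with (k + 4 + 1) by lia. apply Hrun. lia. }
  assert (E6 : s (k + 2 + 4) = s (k + 2)).
  { replace (k + 2 + 4) with (k + 4 + 2) by lia. apply Hrun. lia. }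
  apply (rule_iii_forbids (k + 2) (odd_add_even k 1 Hodd) ltac:(lia) ltac:(lia)).
  - intros E. exfalso.
    assert (E12 : s (k + 1) = s (k + 2)).
    { rewrite <- E5, E. reflexivity. }
    exact (rule_iii_forbids k Hodd Hk ltac:(lia) (fun _ => E12) E4).
  - exact E6.
Qed.

End AnnStrategy.

Theorem mainTheorem6 (T : Type) (s : nat -> T) (n : nat) :
  ann_follows_strategy s n ->
  forall h : nat, 2 <= h <= 4 -> ~ has_repetition s n h.
Proof.
  intros strategy h Hh Hrep.
  destruct (repetition_odd_run s n h ltac:(lia) Hrep)
    as [k [Hodd [Hk [Hn Hrun]]]].
  assert (Hcases : h = 2 \/ h = 3 \/ h = 4) by lia.
  destruct Hcases as [-> | [-> | ->]].
  - exact (no_odd_run_2 T s n strategy k Hodd Hk ltac:(lia) Hrun).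
  - exact (no_odd_run_3 T s n strategy k Hodd Hk ltac:(lia) Hrun).
  - exact (no_odd_run_4 T s n strategy k Hodd Hk ltac:(lia) Hrun).
Qed.
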